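(* Let $P_1\subseteq P_2$ be meet semilattices with $0$ such that $P_1\subseteq P_2$ preserves finite covers and is tight, and let $Y=\bigcup_{x\in P_1}V^{P_2}_x\subseteq T(P_2)$. Then the image of $\mathcal T_c(P_1)$ in $\mathcal T_c(P_2)$ under $U\mapsto re^{-1}(U)$ is exactly the set of compact open subsets of $T(P_2)$ contained in $Y$.
   Context: A meet semilattice with $0$ is a meet semilattice with least element $0$; $P_1\subseteq P_2$ means an injective meet- and $0$-preserving map identifying $P_1$ with a subset of $P_2$. A filter of $P$ is a subset $F$ with $\emptyset\ne F\ne P$, closed upwards and under $\wedge$; $F(P)$ has the topology generated by $U_x=\{F:x\in F\}$, with basis of compact open sets $U_{(x:x_1,\dots,x_n)}=\{F:x\in F,\ x_1,\dots,x_n\notin F\}$. The tight filters $T(P)$ are the closure of the ultrafilters in $F(P)$; $V^P_{(x:x_1,\dots,x_n)}=U_{(x:x_1,\dots,x_n)}\cap T(P)$, $V^P_x=V^P_{(x:)}$. $\mathcal T_c(P)$ is the generalized Boolean algebra of compact open subsets of $T(P)$. A finite cover of $x\in P$ is a finite set of elements $\le x$ such that every $0\ne y\le x$ meets one of them nontrivially; $P_1\subseteq P_2$ preserves finite covers if every finite cover in $P_1$ of $x\in P_1$ is a finite cover of $x$ in $P_2$. In that case $re:T(P_2)\dashrightarrow T(P_1)$, $\xi\mapsto\xi\cap P_1$ (defined when nonempty), is a partial map to tight filters and $U\mapsto re^{-1}(U)$ is an injective generalized Boolean algebra morphism $\mathcal T_c(P_1)\to\mathcal T_c(P_2)$; $P_1\subseteq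 P_2$ is called tight if its image is an ideal (closed under unions and under intersection with arbitrary elements of $\mathcal T_c(P_2)$). *)

From HB Require Import structures.
From mathcomp Require Import all_boot all_order.
From mathcomp Require Import boolp classical_sets.
Set Implicit Arguments. Unset Strict Implicit. Unset Printing Implicit Defensive.
Import Order.Theory.
Local Open Scope classical_set_scope.
Local Open Scope order_scope.

Section Semilattice.
Context {d : Order.disp_t} (P : bMeetSemilatticeType d).

Definition is_filter (F : set P) : Prop :=
  [/\ F !=set0, F != setT,
      (forall x y : P, F x -> x <= y -> F y) &
      (forall x y : P, F x -> F y -> F (x `&` y))].

Definition is_ultrafilter (F : set P) : Prop :=
  is_filter F /\ forall G : set P, is_filter G -> F `<=` G -> G = F.

Definition basicU (x : P) (xs : seq P) : set (set P) :=
  [set F | is_filter F /\ F x /\ forall y, y \in xs -> ~ F y].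

(* Tight filters: closure in F(P) of the set of ultrafilters
   (tested against the basis U_{(x:x_1..x_n)}). *)
Definition is_tight (F : set P) : Prop :=
  is_filter F /\
  forall (x : P) (xs : seq P), basicU x xs F ->
    exists G, is_ultrafilter G /\ basicU x xs G.

Definition tight : set (set P) := [set F | is_tight F].

(* Open subsets of T(P) in the subspace topology. *)
Definition openT (O : set (set P)) : Prop :=
  O `<=` tight /\
  forall F, O F -> exists (x : P) (xs : seq P),
      basicU x xs F /\ (basicU x xs `&` tight) `<=` O.

Definition compactT (K : set (set P)) : Prop :=
  K `<=` tight /\
  forall C : set (set (set P)), (forall O, C O -> openT O) ->
    K `<=` \bigcup_(O in C) O ->
    exists (n : nat) (Os : nat -> set (set P)),
      (forall i, (i < n)%N -> C (Os i)) /\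
      (forall F, K F -> exists2 i, (i < n)%N & Os i F).

Definition Tc : set (set (set P)) := [set K | openT K /\ compactT K].

Definition finite_cover (x : P) (C : seq P) : Prop :=
  (forall c, c \in C -> c <= x) /\
  forall y : P, y != \bot -> y <= x -> exists2 c, c \in C & y `&` c != \bot.

End Semilattice.

Arguments tight {d} P _.
Arguments Tc {d} P _.

Section Inclusion.
Context {d1 d2 : Order.disp_t} (P1 : bMeetSemilatticeType d1)
        (P2 : bMeetSemilatticeType d2).

(* P1 ⊆ P2: injective meet- and 0-preserving map. *)
Definition semilattice_embedding (f : P1 -> P2) : Prop :=
  [/\ injective f, (forall x y, f (x `&` y) = f x `&` f y) & f \bot = \bot].

Definition preserves_finite_covers (f : P1 -> P2) : Prop :=
  forall (x : P1) (C : seq P1), finite_cover x C -> finite_cover (f x) (map f C).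

(* re^{-1}(U) = { xi in T(P2) | xi ∩ P1 is nonempty and lies in U },
   where xi ∩ P1 is the preimage f^{-1}(xi). *)
Definition re_inv (f : P1 -> P2) (U : set (set P1)) : set (set P2) :=
  [set xi | tight P2 xi /\ (f @^-1` xi) !=set0 /\ U (f @^-1` xi)].

(* Tight inclusion: the image of T_c(P1) is an ideal of T_c(P2). *)
Definition tight_inclusion (f : P1 -> P2) : Prop :=
  (forall U U', Tc P1 U -> Tc P1 U' ->
     exists2 U'', Tc P1 U'' & re_inv f U `|` re_inv f U' = re_inv f U'') /\
  (forall U W, Tc P1 U -> Tc P2 W ->
     exists2 U'', Tc P1 U'' & re_inv f U `&` W = re_inv f U'').

End Inclusion.

From HB Require Import structures.
From mathcomp Require Import all_boot all_order.
From mathcomp Require Import boolp classical_sets.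
Import Order.Theory.
Local Open Scope classical_set_scope.
Local Open Scope order_scope.

(* The basic sets V_(x : xs) of T(P) are compact, because F(P) is cut out of
   {0,1}^P by closed conditions and tightness is closed as well. When
   P1 <= P2 preserves finite covers, re^-1 (V_(x : xs)) = V_(f x : f xs): if
   no ultrafilter of P1 lay in V_(x : x ∧ xs), the elements x ∧ x_i would
   cover x, their images would cover f x, and an ultrafilter in
   V_(f x : f xs) would have to contain one of them. Hence re^-1 maps a
   compact open U, a finite union of such basic sets, to a compact open set
   inside Y. Conversely, a compact open W inside Y is covered by finitely
   many V_(f x) = re^-1 (V_x), so W is the finite union of the sets
   W ∩ re^-1 (V_x), which lie in the image because the image is an ideal. *)

Set Implicit Arguments.
Unset Strict Implicit.
Unset Printing Implicit Defensive.

Section Filters.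
Context {d : Order.disp_t} {P : bMeetSemilatticeType d}.
Implicit Types (F G : set P) (x y z : P).

Lemma filter_up F x y : is_filter F -> F x -> x <= y -> F y.
Proof. by case=> _ _ up _; apply: up. Qed.

Lemma filter_meet F x y : is_filter F -> F x -> F y -> F (x `&` y).
Proof. by case=> _ _ _; apply. Qed.

Lemma filter_not_bot F : is_filter F -> ~ F \bot.
Proof.
case=> _ /eqP FT up _ Fbot; apply: FT; apply/seteqP; split=> // y _.
exact: up Fbot (le0x y).
Qed.

Lemma is_filter_intro F : F !=set0 -> ~ F \bot ->
  (forall x y, F x -> x <= y -> F y) ->
  (forall x y, F x -> F y -> F (x `&` y)) -> is_filter F.
Proof.
move=> F0 Fbot up meet; split=> //.
by apply/eqP=> FT; apply: Fbot; rewrite FT.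
Qed.

Lemma ultrafilter_disjoint G y : is_ultrafilter G -> ~ G y ->
  exists2 z, G z & z `&` y = \bot.
Proof.
move=> [fG maxG] Gy; apply: contrapT => Gy_meets.
pose H := [set w | exists2 z, G z & z `&` y <= w].
have GH : G `<=` H by move=> z Gz; exists z => //; apply: leIl.
have fH : is_filter H.
  have [[z Gz] _ _ _] := fG.
  apply: is_filter_intro; first by exists (z `&` y), z.
  - case=> w Gw; rewrite lex0 => /eqP wy; apply: Gy_meets; exists w => //.
  - by move=> a b [z' Gz' z'a] ab; exists z' => //; apply: le_trans ab.
  - move=> a b [z1 G1 z1a] [z2 G2 z2b]; exists (z1 `&` z2).
      exact: filter_meet.
    rewrite lexI (le_trans _ z1a) ?(le_trans _ z2b) //;
      by rewrite leI2 ?leIl ?leIr.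
apply: Gy; rewrite -(maxG H fH GH); have [[z Gz] _ _ _] := fG.
by exists z => //; apply: leIr.
Qed.

Lemma ultrafilter_exists y : y != \bot -> exists2 G, is_ultrafilter G & G y.
Proof.
move=> y0.
(* The last clause, rather than [A y], lets the empty chain have an upper
   bound. *)
pose Q (A : set P) := [/\ ~ A \bot, (forall a b, A a -> a <= b -> A b),
   (forall a b, A a -> A b -> A (a `&` b)) & (A !=set0 -> A y)].
have [A [[Abot Aup Ameet Ay] Amax]] : exists A, Q A /\ forall B, A `<` B -> ~ Q B.
  apply: Zorn_bigcup => FF FFQ FFtot; split.
  - by case=> X FX; have [] := FFQ X FX.
  - move=> a b [X FX Xa] ab; exists X => //.
    by have [_ up _ _] := FFQ X FX; apply: up Xa ab.
  - move=> a b [X FX Xa] [X' FX' X'b].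
    have [XX'|X'X] := FFtot X X' FX FX'.
      by exists X' => //; have [_ _ meet _] := FFQ X' FX'; apply: meet (XX' a Xa) X'b.
    by exists X => //; have [_ _ meet _] := FFQ X FX; apply: meet Xa (X'X b X'b).
  - case=> a [X FX Xa]; exists X => //.
    by have [_ _ _ Xy] := FFQ X FX; apply: Xy; exists a.
have uy : Q [set w | y <= w].
  split=> //=; first by rewrite lex0 (negPf y0).
  - by move=> a b ya ab; apply: le_trans ab.
  - by move=> a b ya yb; rewrite lexI ya yb.
have A0 : A !=set0.
  apply: contrapT => /set0P/negP/negPn/eqP A0.
  by apply: (Amax _ _ uy); rewrite A0; split=> // /(_ y (lexx y)).
have fA : is_filter A by apply: is_filter_intro.
exists A; last exact: Ay.
split=> // G fG AG; apply: contrapT => GA; apply: (Amax G).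
  by split=> // GsubA; apply: GA; apply/seteqP.
split; [exact: filter_not_bot | move=> a b; exact: filter_up |
  move=> a b; exact: filter_meet |].
by move=> _; apply: AG; apply: Ay.
Qed.

Lemma ultrafilter_disjoint_seq G x (C : seq P) : is_ultrafilter G -> G x ->
  (forall c, c \in C -> ~ G c) ->
  exists z, [/\ G z, z <= x & forall c, c \in C -> z `&` c = \bot].
Proof.
move=> uG Gx; elim: C => [|c C IH] GC; first by exists x.
have [z [Gz zx zC]] := IH (fun c' Cc' => GC c' (mem_behead (s := c :: C) Cc')).
have [z' Gz' z'c] := ultrafilter_disjoint uG (GC c (mem_head c C)).
exists (z `&` z'); split; first exact: filter_meet uG.1 Gz Gz'.
  exact: le_trans (leIl _ _) zx.
move=> c'; rewrite inE => /predU1P[-> | Cc']; apply/eqP; rewrite -lex0.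
  by rewrite -z'c -meetA leIr.
by rewrite -(zC c' Cc') leI2 ?leIl.
Qed.

Lemma ultrafilter_meets_finite_cover G x (C : seq P) :
  is_ultrafilter G -> G x -> finite_cover x C -> exists2 c, c \in C & G c.
Proof.
move=> uG Gx [_ Ccov]; apply: contrapT => GC.
have [z [Gz zx zC]] :=
  ultrafilter_disjoint_seq uG Gx (fun c Cc Gc => GC (ex_intro2 _ _ c Cc Gc)).
have z0 : z != \bot by apply: contra_notN (filter_not_bot uG.1) => /eqP <-.
by have [c Cc] := Ccov z z0 zx; rewrite zC ?eqxx.
Qed.

Lemma finite_cover_of_no_ultrafilter x (xs : seq P) :
  ~ (exists G, is_ultrafilter G /\ basicU x xs G) ->
  finite_cover x [seq x `&` y | y <- xs].
Proof.
move=> noG; split=> [_ /mapP[y _ ->] | y y0 yx]; first exact: leIl.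
apply: contrapT => ymeets; have [G uG Gy] := ultrafilter_exists y0.
apply: noG; exists G; split=> //; split; first exact: uG.1.
split=> [|z xsz Gz]; first exact: filter_up uG.1 Gy yx.
apply: (filter_not_bot uG.1).
have <- : y `&` (x `&` z) = \bot.
  apply/eqP; apply: contrapT => /negP yxz; apply: ymeets.
  by exists (x `&` z) => //; apply/mapP; exists z.
by rewrite meetA (meet_l yx); apply: filter_meet uG.1 Gy Gz.
Qed.

End Filters.

Section FiniteSubcover.
Context {T : Type} (C : set (set T)).

Definition finite_subcover (K : set T) : Prop :=
  exists2 Os : seq (set T), [set` Os] `<=` C & K `<=` \bigcup_(O in [set` Os]) O.

Lemma finite_subcover_sub K K' : finite_subcover K -> K' `<=` K -> finite_subcover K'.
Proof. by move=> [Os OsC KOs] K'K; exists Os => // F /K'K /KOs. Qed.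

Lemma finite_subcover0 : finite_subcover set0.
Proof. by exists [::]. Qed.

Lemma finite_subcover1 O K : C O -> K `<=` O -> finite_subcover K.
Proof.
move=> CO KO; exists [:: O] => [O' /= | F /KO OF].
  by rewrite inE => /eqP ->.
by exists O; rewrite /= ?inE.
Qed.

Lemma finite_subcoverU K K' :
  finite_subcover K -> finite_subcover K' -> finite_subcover (K `|` K').
Proof.
move=> [Os OsC KOs] [Os' Os'C K'Os']; exists (Os ++ Os').
  by move=> O /=; rewrite mem_cat => /orP[/OsC | /Os'C].
by move=> F [/KOs | /K'Os'] [O /= OsO OF]; exists O; rewrite //= mem_cat OsO ?orbT.
Qed.

Lemma finite_subcover_bigcup {I : eqType} (s : seq I) (K : I -> set T) :
  (forall i, i \in s -> finite_subcover (K i)) ->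
  finite_subcover (\bigcup_(i in [set` s]) K i).
Proof.
elim: s => [|i s IH] Ks.
  by apply: finite_subcover_sub finite_subcover0 _ => F [].
apply: finite_subcover_sub (finite_subcoverU (Ks i (mem_head i s))
  (IH (fun j sj => Ks j (mem_behead (s := i :: s) sj)))) _.
by move=> F [j /=]; rewrite inE => /predU1P[-> | sj] KjF; [left | right; exists j].
Qed.

End FiniteSubcover.

Arguments finite_subcover0 {T C}.

Lemma bigcup_seq_closed {T : Type} {I : eqType} (Fam : set (set T)) (s : seq I)
    (K : I -> set T) :
  Fam set0 -> (forall A B, Fam A -> Fam B -> Fam (A `|` B)) ->
  (forall i, i \in s -> Fam (K i)) -> Fam (\bigcup_(i in [set` s]) K i).
Proof.
move=> Fam0 FamU; elim: s => [|i s IH] Ks.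
  by rewrite set_nil bigcup_set0.
have -> : \bigcup_(j in [set` i :: s]) K j = K i `|` \bigcup_(j in [set` s]) K j.
  apply/seteqP; split=> [F [j /=] | F [KiF | [j /= sj KjF]]].
  - by rewrite inE => /predU1P[-> | sj] KjF; [left | right; exists j].
  - by exists i; rewrite /= ?inE ?eqxx.
  - by exists j; rewrite //= inE sj orbT.
apply: FamU (Ks i (mem_head i s)) _.
exact: IH (fun j sj => Ks j (mem_behead (s := i :: s) sj)).
Qed.

Lemma chain_bigcup_seq {I : eqType} (FF : set (set I)) (s : seq I) :
  total_on FF subset -> [set` s] `<=` \bigcup_(X in FF) X ->
  s = [::] \/ exists2 X, FF X & [set` s] `<=` X.
Proof.
move=> FFtot; elim: s => [|i s IH] sFF; first by left.
right; have [X FX Xi] := sFF i (mem_head i s).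
have Xcons X' : X' i -> [set` s] `<=` X' -> [set` i :: s] `<=` X'.
  by move=> X'i sX' j /=; rewrite inE => /predU1P[-> | /sX'].
case: (IH (fun j sj => sFF j (mem_behead (s := i :: s) sj))) => [-> | [X' FX' sX']].
  by exists X => // j /=; rewrite inE => /eqP ->.
have [XX' | X'X] := FFtot X X' FX FX'.
  by exists X' => //; apply: Xcons (XX' i Xi) sX'.
by exists X => //; apply: (Xcons X) => // j /sX' /X'X.
Qed.

Section Cylinders.
Context {T : eqType}.

Definition literal (l : bool * T) : set (set T) :=
  [set F | if l.1 then F l.2 else ~ F l.2].

Definition cylinder (s : seq (bool * T)) : set (set T) :=
  [set F | forall l, l \in s -> literal l F].

Lemma cylinder_cons (l : bool * T) (s : seq (bool * T)) :
  cylinder (l :: s) = literal l `&` cylinder s.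
Proof.
apply/seteqP; split=> [F Fls | F [Fl Fs] l']; first split.
- exact: Fls (mem_head l s).
- by move=> l' sl'; apply: Fls; rewrite inE sl' orbT.
- by rewrite inE => /predU1P[-> | /Fs].
Qed.

Lemma cylinder_nil : cylinder [::] = @setT (set T).
Proof. by apply/seteqP; split. Qed.

(* The compactness of the product space {0,1}^T: a maximal set of literals
   whose finite conjunctions keep S uncoverable is complete, hence is the
   graph of a point F0. *)
Lemma uncovered_cylinder_point (C : set (set (set T))) (S : set (set T)) :
  ~ finite_subcover C S ->
  exists F0 : set T, forall s, cylinder s F0 -> ~ finite_subcover C (S `&` cylinder s).
Proof.
move=> SC.
pose good D := forall s, [set` s] `<=` D -> ~ finite_subcover C (S `&` cylinder s).
have [D [Dgood Dmax]] : exists D, good D /\ forall B, D `<` B -> ~ good B.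
  apply: Zorn_bigcup => FF FFgood FFtot s sFF.
  case: (chain_bigcup_seq FFtot sFF) => [-> | [X FX sX]]; last exact: FFgood sX.
  by apply: contra_not SC => cov; apply: finite_subcover_sub cov _ => F SF; split.
have Dtotal z : D (true, z) \/ D (false, z).
  apply: contrapT => /not_orP[Dt Df].
  have Dproper b : ~ D (b, z) -> D `<` D `|` [set (b, z)].
    by move=> Dbz; split=> [l Dl | DbD]; [left | apply: Dbz; apply: DbD; right].
  apply: (Dmax _ (Dproper true Dt)) => s1 s1D cov1.
  apply: (Dmax _ (Dproper false Df)) => s2 s2D cov2.
  pose s := [seq l <- s1 ++ s2 | `[< D l >]].
  apply: (Dgood s); first by move=> l /=; rewrite mem_filter => /andP[/asboolP].
  apply: finite_subcover_sub (finite_subcoverU cov1 cov2) _ => F [SF Fs].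
  have lift b s' : [set` s'] `<=` D `|` [set (b, z)] -> {subset s' <= s1 ++ s2} ->
      literal (b, z) F -> cylinder s' F.
    move=> s'D s's Fbz l s'l; case: (s'D l s'l) => [Dl | -> //].
    by apply: Fs; rewrite mem_filter s's // andbT; apply/asboolP.
  case: (pselect (F z)) => Fz; [left | right]; split=> //.
    by apply: lift s1D _ Fz => l s1l; rewrite mem_cat s1l.
  by apply: lift s2D _ Fz => l s2l; rewrite mem_cat s2l orbT.
exists [set z | D (true, z)] => s sF0; apply: Dgood => -[[] z] sl;
  have /= := sF0 _ sl; first by [].
by move=> Dt; case: (Dtotal z).
Qed.

End Cylinders.

Section TightSpace.
Context {d : Order.disp_t} {P : bMeetSemilatticeType d}.
Implicit Types (F G : set P) (x y : P) (xs ys : seq P).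

Definition basicV x xs : set (set P) := basicU x xs `&` tight P.

Definition basic_literals y ys : seq (bool * P) :=
  (true, y) :: [seq (false, w) | w <- ys].

Lemma basicU_cylinder y ys F :
  is_filter F -> basicU y ys F <-> cylinder (basic_literals y ys) F.
Proof.
move=> fF; rewrite cylinder_cons; split=> [[_ [Fy Fys]] | [Fy Fys]].
  by split=> // l /mapP[w ysw ->]; apply: Fys.
by split=> //; split=> // w ysw; apply: (Fys (false, w)); rewrite map_f.
Qed.

Lemma compactTP (K : set (set P)) : compactT K <->
  K `<=` tight P /\ forall C, (forall O, C O -> openT O) ->
     K `<=` \bigcup_(O in C) O -> finite_subcover C K.
Proof.
split=> -[Kt Kcov]; split=> // C Copen KC; have := Kcov C Copen KC.
- move=> [n [Os [OsC KOs]]]; exists [seq Os i | i <- iota 0 n].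
    by move=> O /= /mapP[i]; rewrite mem_iota add0n => /andP[_ /OsC COs ->].
  move=> F /KOs[i ilt OsF]; exists (Os i) => //=.
  by apply/mapP; exists i; rewrite ?mem_iota ?add0n.
- move=> [Os OsC KOs]; exists (size Os), (nth set0 Os); split.
    by move=> i ilt; apply: OsC; rewrite /= mem_nth.
  by move=> F /KOs[O /= /(nthP set0)[i ilt <-] OF]; exists i.
Qed.

Lemma compactT_basicV x xs : compactT (basicV x xs).
Proof.
apply/compactTP; split=> [F [] // | C Copen Vcov].
apply: contrapT => /uncovered_cylinder_point[F0 F0cyl].
have meets s : cylinder s F0 -> exists2 G, basicV x xs G & cylinder s G.
  move=> /F0cyl noCov; apply: contrapT => noG; apply: noCov.
  by apply: finite_subcover_sub finite_subcover0 _ => G [VG sG]; apply: noG; exists G.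
have F0x : F0 x.
  apply: contrapT => nF0x.
  have /meets[G [[_ [Gx _]] _]] : cylinder [:: (false, x)] F0.
    by rewrite cylinder_cons cylinder_nil.
  by rewrite cylinder_cons => -[].
have fF0 : is_filter F0.
  apply: is_filter_intro; first by exists x.
  - move=> F0bot; have /meets[G [[fG _] _]] : cylinder [:: (true, \bot)] F0.
      by rewrite cylinder_cons cylinder_nil.
    by rewrite cylinder_cons => -[/(filter_not_bot fG)].
  - move=> a b F0a ab; apply: contrapT => F0b.
    have /meets[G [[fG _] _]] : cylinder [:: (true, a); (false, b)] F0.
      by rewrite !cylinder_cons cylinder_nil.
    by rewrite !cylinder_cons => -[Ga [/(_ (filter_up fG Ga ab))]].
  - move=> a b F0a F0b; apply: contrapT => F0ab.
    have /meets[G [[fG _] _]] : cylinder [:: (true, a); (true, b); (false, a `&` b)] F0.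
      by rewrite !cylinder_cons cylinder_nil.
    by rewrite !cylinder_cons => -[Ga [Gb [/(_ (filter_meet fG Ga Gb))]]].
have V_F0 : basicV x xs F0.
  split; first (split=> //; split=> // w xsw F0w).
    have /meets[G [[_ [_ Gxs]] _]] : cylinder [:: (true, w)] F0.
      by rewrite cylinder_cons cylinder_nil.
    by rewrite cylinder_cons => -[/(Gxs w xsw)].
  split=> // y ys /(basicU_cylinder y ys fF0) /meets[G [[fG _] tG]].
  by move=> /(basicU_cylinder y ys fG) U_G; apply: tG.2.
have [O CO OF0] := Vcov F0 V_F0.
have [y [ys [U_F0 VO]]] := (Copen O CO).2 F0 OF0.
apply: F0cyl ((basicU_cylinder y ys fF0).1 U_F0) _.
apply: finite_subcover1 CO _ => G [[[fG _] tG] G_cyl]; apply: VO; split=> //.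
exact/(basicU_cylinder y ys fG).
Qed.

Lemma openT_basicV x xs : openT (basicV x xs).
Proof. by split=> [F [] // | F VF]; exists x, xs; split=> //; case: VF. Qed.

Lemma Tc_basicV x xs : Tc P (basicV x xs).
Proof. by split; [exact: openT_basicV | exact: compactT_basicV]. Qed.

Lemma Tc_set0 : Tc P set0.
Proof.
by split; [split | apply/compactTP; split=> // C _ _; apply: finite_subcover0].
Qed.

End TightSpace.

Section Restriction.
Context {d1 d2 : Order.disp_t} {P1 : bMeetSemilatticeType d1}
  {P2 : bMeetSemilatticeType d2} (f : P1 -> P2).
Hypothesis hf : semilattice_embedding f.

Lemma embedding_le (x y : P1) : x <= y -> f x <= f y.
Proof. by case: hf => _ fI _ /meet_idPl xy; apply/meet_idPl; rewrite -fI xy. Qed.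

Lemma preimage_filter (xi : set P2) : is_filter xi -> (exists x, xi (f x)) ->
  is_filter (f @^-1` xi).
Proof.
case: hf => _ fI f0 fxi [x xix]; apply: is_filter_intro; first by exists x.
- by rewrite /preimage /= f0; apply: filter_not_bot.
- by move=> a b xia /embedding_le; apply: filter_up.
- by move=> a b xia xib; rewrite /preimage /= fI; apply: filter_meet.
Qed.

Lemma re_inv_sub (U U' : set (set P1)) : U `<=` U' -> re_inv f U `<=` re_inv f U'.
Proof. by move=> UU' xi [txi [ne /UU' U'xi]]. Qed.

Hypothesis hcov : preserves_finite_covers f.

Lemma preimage_tight (xi : set P2) : tight P2 xi -> (exists x, xi (f x)) ->
  tight P1 (f @^-1` xi).
Proof.
move=> [fxi txi] ne; split=> [|x xs [_ [xix xsx]]]; first exact: preimage_filter.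
apply: contrapT => /finite_cover_of_no_ultrafilter/hcov fcov.
have [G [uG [fG [Gfx Gxs]]]] : exists G, is_ultrafilter G /\ basicU (f x) (map f xs) G.
  by apply: txi; split=> //; split=> // _ /mapP[y xsy ->]; apply: xsx.
have [_ /mapP[_ /mapP[y xsy ->] ->] Gfxy] := ultrafilter_meets_finite_cover uG Gfx fcov.
by apply: (Gxs (f y)); [exact: map_f | apply: filter_up Gfxy (embedding_le (leIr _ _))].
Qed.

Lemma re_inv_basicV (x : P1) (xs : seq P1) :
  re_inv f (basicV x xs) = basicV (f x) (map f xs).
Proof.
apply/seteqP; split=> [xi [txi [_ [[_ [xix xsx]] _]]] | xi [[fxi [xix xsx]] txi]].
  by split=> //; split; [exact: txi.1 | split=> // _ /mapP[y xsy ->]; apply: xsx].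
have ne : exists x, xi (f x) by exists x.
split=> //; split=> //; split; last exact: preimage_tight.
split; first exact: preimage_filter.
by split=> // y xsy; apply: xsx; rewrite map_f.
Qed.

Lemma re_inv_Tc (U : set (set P1)) : Tc P1 U -> Tc P2 (re_inv f U).
Proof.
move=> [oU cU]; split.
  split=> [xi [] // | xi [txi [ne Uxi]]].
  have [y [ys [Uy VU]]] := oU.2 _ Uxi.
  exists (f y), (map f ys); split.
    have : re_inv f (basicV y ys) xi by split=> //; split=> //; split=> //; apply: oU.1.
    by rewrite re_inv_basicV => -[].
  by rewrite -/(basicV (f y) (map f ys)) -re_inv_basicV; apply: re_inv_sub.
apply/compactTP; split=> [xi [] // | C Copen cover].
pose B := [set O | exists y ys, O = basicV y ys /\ O `<=` U].
have [Os OsB UOs] : finite_subcover B U.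
  have [_] := (compactTP U).1 cU; apply=> [O [y [ys [-> _]]] | eta Ueta].
    exact: openT_basicV.
  have [y [ys [Uy VU]]] := oU.2 _ Ueta.
  by exists (basicV y ys); [exists y, ys | split=> //; apply: oU.1].
apply: finite_subcover_sub (finite_subcover_bigcup (K := re_inv f) _) _.
  move=> O OsO; have [y [ys [-> VU]]] := OsB O OsO; rewrite re_inv_basicV.
  have [_] := (compactTP _).1 (compactT_basicV (f y) (map f ys)); apply=> //.
  by rewrite -re_inv_basicV; apply: subset_trans cover; apply: re_inv_sub.
by move=> xi [txi [ne /UOs[O OsO OF]]]; exists O.
Qed.

Hypothesis htight : tight_inclusion f.

Lemma re_inv_onto_Tc_dom (W : set (set P2)) : Tc P2 W ->
  (forall xi, W xi -> exists x, xi (f x)) -> exists2 U, Tc P1 U & W = re_inv f U.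
Proof.
move=> TcW WY; pose B := [set O | exists x, O = basicV (f x) [::]].
have [Os OsB WOs] : finite_subcover B W.
  have [_] := (compactTP W).1 TcW.2; apply=> [O [x ->] | xi Wxi].
    exact: openT_basicV.
  have [x xix] := WY xi Wxi; have txi := TcW.2.1 xi Wxi.
  by exists (basicV (f x) [::]); [exists x | split=> //; split; first exact: txi.1].
have -> : W = \bigcup_(O in [set` Os]) (W `&` O).
  by apply/seteqP; split=> [xi Wxi | xi [O _ []]] //; have [O] := WOs xi Wxi; exists O.
apply: (bigcup_seq_closed (Fam := [set W' | exists2 U, Tc P1 U & W' = re_inv f U])).
- by exists set0; [exact: Tc_set0 | apply/seteqP; split=> xi // [_ []]].
- move=> _ _ [U TcU ->] [U' TcU' ->].
  by have [U'' TcU'' ->] := htight.1 U U' TcU TcU'; exists U''.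
- move=> O OsO; have [x ->] := OsB O OsO.
  have [U TcU e] := htight.2 _ W (Tc_basicV x [::]) TcW.
  by exists U; rewrite // -e re_inv_basicV meetC.
Qed.

End Restriction.

Theorem mainTheorem11 (d1 d2 : Order.disp_t)
  (P1 : bMeetSemilatticeType d1) (P2 : bMeetSemilatticeType d2)
  (f : P1 -> P2)
  (hf : semilattice_embedding f)
  (hcov : preserves_finite_covers f)
  (htight : tight_inclusion f) :
  let Y : set (set P2) := [set xi | tight P2 xi /\ exists x : P1, xi (f x)] in
  forall W : set (set P2),
    (exists2 U, Tc P1 U & W = re_inv f U) <-> (Tc P2 W /\ W `<=` Y).
Proof.
move=> Y W; split=> [[U TcU ->] | [TcW WY]].
  split; first exact: re_inv_Tc.
  by move=> xi [txi [[x xix] _]]; split=> //; exists x.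
by apply: re_inv_onto_Tc_dom => // xi /WY[].
Qed.
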